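(* Let $X$ be a locally compact, completely regular Hausdorff ($T_{3\frac12}$) space, let $\hat X$ be any compactification of $X$, and let $a\subseteq X$. Then every end $e$ of $a$ has non-empty connected boundary $\partial e$.
   Context: An end of a subset $a\subseteq X$ is a function $e$ from the family of compact subsets of $X$ to subsets of $a$ such that: - for each compact $K\subseteq X$, $e(K)$ is a connected component of $a\setminus K$; - $e(K)\supseteq e(K')$ whenever $K\subseteq K'$ are compact. For $b\subseteq X$, its boundary is $\partial b=\overline{b}^{\hat X}\setminus X$, the closure of $b$ taken in $\hat X$, minus $X$. The boundary of the end $e$ is $\partial e=\bigcap_{K\subseteq X\text{ compact}}\partial e(K)$. *)

From HB Require Import structures.
From mathcomp Require Import all_boot all_order all_algebra.
From mathcomp Require Import all_classical all_reals all_analysis.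
Set Implicit Arguments. Unset Strict Implicit. Unset Printing Implicit Defensive.
Import Order.TTheory GRing.Theory Num.Theory.
Local Open Scope classical_set_scope.

Definition embedding (X Y : topologicalType) (f : X -> Y) : Prop :=
  [/\ continuous f, injective f &
      forall U : set X, open U ->
        exists V : set Y, open V /\ f @` U = V `&` range f].

Definition compactification (X Y : topologicalType) (f : X -> Y) : Prop :=
  [/\ compact [set: Y], hausdorff_space Y, embedding f & dense (range f)].

Definition is_end (X : topologicalType) (a : set X) (e : set X -> set X) : Prop :=
  (forall K : set X, compact K ->
     e K `<=` a /\
     exists2 x, (a `\` K) x & e K = connected_component (a `\` K) x) /\
  (forall K K' : set X, compact K -> compact K' -> K `<=` K' -> e K' `<=` e K).

Definition bdry (X Y : topologicalType) (f : X -> Y) (b : set X) : set Y :=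
  closure (f @` b) `\` range f.

Definition end_bdry (X Y : topologicalType) (f : X -> Y) (e : set X -> set X)
  : set Y :=
  \bigcap_(K in [set K : set X | compact K]) bdry f (e K).

From HB Require Import structures.
From mathcomp Require Import all_boot all_order all_algebra.
From mathcomp Require Import all_classical all_reals all_analysis.
From mathcomp Require Import Rstruct.
Local Open Scope classical_set_scope.

(* The closures C K of the sets e K, K compact, are nonempty, closed and
   connected in the compact Hausdorff space Y, and they form a downward
   directed family since e is antitone and K1 `|` K2 is compact.  By local
   compactness their intersection already misses X, so it is the boundary of
   e.  In a compact space such an intersection is nonempty, and it is
   connected: a separation of it into two closed parts is, by normality, a
   separation by disjoint open sets U and V; by compactness some C K lies in
   U `|` V, hence by connectedness in one of them, while the intersection
   meets both. *)

Definition downward_directed {T I : Type} (D : set I) (C : I -> set T) :=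
  forall i j, D i -> D j -> exists2 k, D k & C k `<=` C i `&` C j.

Lemma bigcap_directed_neq0 (Y : topologicalType) (I : Type) (D : set I)
    (C : I -> set Y) :
  compact [set: Y] -> (forall i, D i -> closed (C i)) -> D !=set0 ->
  downward_directed D C -> (forall i, D i -> C i !=set0) ->
  \bigcap_(i in D) C i !=set0.
Proof.
move=> cY clC [i0 Di0] dirC neC.
have FF := filter_from_filter (ex_intro _ i0 Di0) dirC.
have PF := filter_from_proper FF neC.
have [y [_ cly]] := cY _ PF filterT.
exists y => i Di; rewrite clusterE in cly.
have := cly (C i) (ex_intro2 _ _ i Di (@subset_refl _ _)).
by rewrite -(closure_id _).1 //; exact: clC.
Qed.

Lemma bigcap_directed_sub_open (Y : topologicalType) (I : Type) (D : set I)
    (C : I -> set Y) (O : set Y) :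
  compact [set: Y] -> (forall i, D i -> closed (C i)) -> D !=set0 ->
  downward_directed D C -> open O -> \bigcap_(i in D) C i `<=` O ->
  exists2 i, D i & C i `<=` O.
Proof.
move=> cY clC D0 dirC oO capO; apply: contrapT => noSub.
have [y capy] : \bigcap_(i in D) (C i `&` ~` O) !=set0.
  apply: bigcap_directed_neq0 => //.
  - by move=> i Di; apply: closedI; [exact: clC|exact: open_closedC].
  - move=> i j Di Dj; have [k Dk sk] := dirC i j Di Dj.
    by exists k => // y [/sk [Ciy Cjy] nOy].
  - move=> i Di; apply/set0P/eqP => CiO0; apply: noSub.
    exists i => // y Ciy; apply: contrapT => nOy.
    by have : (C i `&` ~` O) y by []; rewrite CiO0.
have [i0 Di0] := D0; have [_ nOy] := capy i0 Di0.
by apply: nOy; apply: capO => i Di; have [] := capy i Di.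
Qed.

Lemma separated_closedl {T : topologicalType} {A B : set T} :
  separated A B -> closed (A `|` B) -> closed A.
Proof.
move=> [clAB _] clU x clAx.
have : (A `|` B) x by apply: clU; exact: (closureS (@subsetUl _ A B)).
case=> // Bx.
by have : (closure A `&` B) x by []; rewrite clAB.
Qed.

Lemma separated_open {T : topologicalType} {U V : set T} :
  open U -> open V -> U `&` V = set0 -> separated U V.
Proof.
move=> oU oV UV0; split; apply/seteqP; split => // y [].
  move=> clUy Vy; have [z [Uz Vz]] := clUy V (open_nbhs_nbhs (conj oV Vy)).
  by have : (U `&` V) z by []; rewrite UV0.
move=> Uy clVy; have [z [Vz Uz]] := clVy U (open_nbhs_nbhs (conj oU Uy)).
by have : (U `&` V) z by []; rewrite UV0.
Qed.

Lemma connected_bigcap_directed (Y : topologicalType) (I : Type) (D : set I)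
    (C : I -> set Y) :
  compact [set: Y] -> hausdorff_space Y -> D !=set0 ->
  (forall i, D i -> closed (C i)) -> (forall i, D i -> connected (C i)) ->
  downward_directed D C -> connected (\bigcap_(i in D) C i).
Proof.
move=> cY hY D0 clC conC dirC.
set B := \bigcap_(i in D) C i.
have clB : closed B by exact: closed_bigI.
apply/connectedP => E [E0 BE sE].
have clE0 : closed (E false) by apply: separated_closedl sE _; rewrite -BE.
have clE1 : closed (E true).
  apply: (@separated_closedl _ _ (E false)); first by rewrite separatedC.
  by rewrite setUC -BE.
have [U [V [oU oV EU EV UV0]]] :
    exists U V, [/\ open U, open V, E false `<=` U, E true `<=` V &
                     U `&` V = set0].
  (* normal_openP carries an unused realType parameter. *)
  apply: (@normal_openP Rdefinitions.R Y).1 => //; first exact: compact_normal.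
  exact: separated_disjoint.
have [i Di CiUV] : exists2 i, D i & C i `<=` U `|` V.
  apply: bigcap_directed_sub_open => //; first exact: openU.
  by rewrite -/B BE; exact: setUSS.
have BCi : B `<=` C i by move=> y By; exact: By.
have [y Ey] := E0 true; have [z Ez] := E0 false.
have [CiU|CiV] := connected_subset (separated_open oU oV UV0) CiUV (conC i Di).
  have : (U `&` V) y by split; [apply/CiU/BCi; rewrite BE; right|exact: EV].
  by rewrite UV0.
have : (U `&` V) z by split; [exact: EU|apply/CiV/BCi; rewrite BE; left].
by rewrite UV0.
Qed.

Lemma embedding_notin_closure_image (X Y : topologicalType) (f : X -> Y)
    (x : X) (N B : set X) :
  embedding f -> nbhs x N -> N `&` B = set0 -> ~ closure (f @` B) (f x).
Proof.
move=> [_ injf embf]; rewrite nbhsE => -[W [oW Wx] WN] NB0.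
have [V [oV WVE]] := embf W oW.
have Vfx : V (f x).
  have : (f @` W) (f x) by exists x.
  by rewrite WVE => -[].
move=> /(_ V (open_nbhs_nbhs (conj oV Vfx))) [_ [[z Bz <-] Vfz]].
have : (V `&` range f) (f z) by split => //; exists z.
rewrite -WVE => -[w Ww /injf wz]; subst w.
have : (N `&` B) z by split; [exact: WN|].
by rewrite NB0.
Qed.

Section end_properties.
Context {X : topologicalType} {a : set X} {e : set X -> set X}.
Hypothesis end_e : is_end a e.

Lemma end_subD {K : set X} : compact K -> e K `<=` a `\` K.
Proof.
by move=> cK; have [_ [x _ ->]] := end_e.1 K cK; exact: connected_component_sub.
Qed.

Lemma end_neq0 {K : set X} : compact K -> e K !=set0.
Proof.
move=> cK; have [_ [x Ax ->]] := end_e.1 K cK.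
by exists x; exact: connected_component_refl.
Qed.

Lemma end_connected {K : set X} : compact K -> connected (e K).
Proof.
by move=> cK; have [_ [x _ ->]] := end_e.1 K cK; exact: component_connected.
Qed.

Lemma end_closure_directed {Y : topologicalType} (f : X -> Y) :
  downward_directed [set K : set X | compact K] (fun K => closure (f @` e K)).
Proof.
move=> K1 K2 cK1 cK2; have cK : compact (K1 `|` K2) by exact: compactU.
exists (K1 `|` K2) => // y Cy; split.
  exact: (closureS (image_subset f (end_e.2 _ _ cK1 cK (@subsetUl _ K1 K2)))).
exact: (closureS (image_subset f (end_e.2 _ _ cK2 cK (@subsetUr _ K1 K2)))).
Qed.

Lemma end_bdryE {Y : topologicalType} (f : X -> Y) :
  locally_compact [set: X] -> embedding f ->
  end_bdry f e = \bigcap_(K in [set K : set X | compact K]) closure (f @` e K).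
Proof.
move=> lcX embf; apply/seteqP; split => y capy K cK.
  by have [] := capy K cK.
split=> [|[x _ fxy]]; first exact: capy.
subst y.
have [U] := lcX x I; rewrite withinET => nU [cU _].
apply: embedding_notin_closure_image embf nU _ (capy U cU).
by apply/disjoints_subset => z Uz /(end_subD cU) [_ /(_ Uz)].
Qed.

End end_properties.

Theorem mainTheorem7 (X Y : topologicalType) (f : X -> Y)
  (a : set X) (e : set X -> set X) :
  locally_compact [set: X] ->
  completely_regular_space X ->
  hausdorff_space X ->
  compactification f ->
  is_end a e ->
  end_bdry f e !=set0 /\ connected (end_bdry f e).
Proof.
move=> lcX _ _ [cY hY embf _] end_e.
have [cf _ _] := embf.
have compact_neq0 : [set K : set X | compact K] !=set0.
  by exists set0; exact: compact0.
have closed_closures K : compact K -> closed (closure (f @` e K)).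
  by move=> _; exact: closed_closure.
have directed_closures := end_closure_directed end_e f.
rewrite (end_bdryE end_e f lcX embf); split.
- apply: bigcap_directed_neq0 => // K cK; have [x ex] := end_neq0 end_e cK.
  by exists (f x); apply: subset_closure; exists x.
- apply: connected_bigcap_directed => // K cK.
  apply/connected_closure/connected_continuous_connected.
    exact: (end_connected end_e cK).
  exact: continuous_subspaceT.
Qed.
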